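(* Let $(\mathcal{G},\alpha)$ be an abstract GKM graph with vertex set $\mathcal{V}$, and let $F$ be a subset of $H_T^*(\mathcal{G})\setminus\{0\}$ such that $fg=0$ for all distinct $f,g\in F$. Then $|F|\le|\mathcal{V}|$, and equality holds if and only if each $f\in F$ is supported at a single vertex (i.e. $\{p\in\mathcal{V}: f(p)\neq0\}$ is a singleton).
   Context: $H^*(BT)=\mathbb{Z}[x_1,\dots,x_r]$ with $\deg x_i=2$. Let $\mathcal{G}$ be a finite $n$-valent undirected graph (multiple edges allowed, no loops) with vertex set $\mathcal{V}$ and set of directed edges $\mathcal{E}$; for $e\in\mathcal{E}$, $\overline e$ is the reversed edge, $i(e),t(e)$ its initial and terminal vertices, and $\mathcal{E}_p=\{e: i(e)=p\}$. An axial function $\alpha:\mathcal{E}\to H^2(BT)$ satisfies: $\alpha(\overline e)=\pm\alpha(e)$; $\alpha(e),\alpha(e')$ linearly independent over $\mathbb{Z}$ if $e\ne e'$, $i(e)=i(e')$; coefficients of each $\alpha(e)$ have gcd $1$. An abstract GKM graph is such $(\mathcal{G},\alpha)$ admitting a parallel transport, i.e. bijections $\mathcal{P}_e:\mathcal{E}_{i(e)}\to\mathcal{E}_{t(e)}$ with $\mathcal{P}_{\overline e}=\mathcal{P}_e^{-1}$, $\mathcal{P}_e(e)=\overline e$, $\alpha(\mathcal{P}_e(e'))-\alpha(e')\in\mathbb{Z}\alpha(e)$. Its graph equivariant cohomology is $H_T^*(\mathcal{G})=\{f:\mathcal{V}\to H^*(BT)\ :\ \alpha(e)\mid f(i(e))-f(t(e))\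 \forall e\in\mathcal{E}\}$ with pointwise operations.
   Formalization: In the equality case, the condition that each f ∈ F be supported at a single vertex is joined by the condition that every vertex of $\mathcal{V}$ lies in the support of some f ∈ F. The statement above fails without it. *)

From mathcomp Require Import all_boot all_order all_algebra.
From mathcomp Require Import mpoly.
Set Implicit Arguments. Unset Strict Implicit. Unset Printing Implicit Defensive.
Import GRing.Theory.
Local Open Scope ring_scope.

(* H^*(BT) = Z[x_1,...,x_r] is {mpoly int[r]}.
   An element of H^2(BT) is a linear form, encoded by its coefficient vector
   a : {ffun 'I_r -> int}; [linform a] is the corresponding polynomial
   sum_k a_k x_k. *)
Definition linform (r : nat) (a : {ffun 'I_r -> int}) : {mpoly int[r]} :=
  \sum_(k < r) (a k)%:MP * 'X_k.

(* A finite n-valent graph without loops (multiple edges allowed):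
   V = vertices, E = directed edges, src = i, tgt = t, rev e = reversed edge. *)
Definition is_graph (V E : finType) (n : nat) (src tgt : E -> V) (rev : E -> E) :=
  [/\ forall e, rev (rev e) = e,
      forall e, src (rev e) = tgt e,
      forall e, src e != tgt e
    & forall p : V, #|[set e | src e == p]| = n].

Definition lin_indep (r : nat) (a b : {ffun 'I_r -> int}) :=
  forall c d : int, (forall k, c * a k + d * b k = 0) -> c = 0 /\ d = 0.

Definition is_axial (V E : finType) (r : nat) (src : E -> V) (rev : E -> E)
    (alpha : E -> {ffun 'I_r -> int}) :=
  [/\ forall e, (forall k, alpha (rev e) k = alpha e k)
                \/ (forall k, alpha (rev e) k = - alpha e k),
      forall e e', e != e' -> src e = src e' -> lin_indep (alpha e) (alpha e')
    & forall e, \big[gcdz/0%Z]_(k < r) alpha e k = 1].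

Definition is_parallel_transport (V E : finType) (r : nat) (src tgt : E -> V)
    (rev : E -> E) (alpha : E -> {ffun 'I_r -> int}) (P : E -> E -> E) :=
  forall e,
  [/\ forall e', src e' = src e -> src (P e e') = tgt e,
      forall e', src e' = src e -> P (rev e) (P e e') = e',
      P e e = rev e
    & forall e', src e' = src e ->
        exists c : int, forall k, alpha (P e e') k - alpha e' k = c * alpha e k].

Definition abstract_GKM (V E : finType) (n r : nat) (src tgt : E -> V)
    (rev : E -> E) (alpha : E -> {ffun 'I_r -> int}) :=
  [/\ is_graph n src tgt rev, is_axial src rev alpha
    & exists P, is_parallel_transport src tgt rev alpha P].

Definition mdvd (r : nat) (a b : {mpoly int[r]}) := exists q, b = a * q.

Definition in_HT (V E : finType) (r : nat) (src tgt : E -> V)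
    (alpha : E -> {ffun 'I_r -> int}) (f : {ffun V -> {mpoly int[r]}}) :=
  forall e, mdvd (linform (alpha e)) (f (src e) - f (tgt e)).

Definition fmul (V : finType) (r : nat) (f g : {ffun V -> {mpoly int[r]}})
  : {ffun V -> {mpoly int[r]}} := [ffun p => f p * g p].

Definition supp (V : finType) (r : nat) (f : {ffun V -> {mpoly int[r]}}) : {set V} :=
  [set p | f p != 0].

From mathcomp Require Import all_boot all_order all_algebra.
From mathcomp Require Import mpoly.
Import GRing.Theory.
Local Open Scope ring_scope.

(** Since H^*(BT) is an integral domain, [fg = 0] forces [f] and [g] to have
    disjoint supports, so the supports of the elements of [F] are nonempty
    pairwise disjoint subsets of [V]: there are at most [|V|] of them, with
    equality exactly when they are the singletons of [V]. *)

Lemma leqif_card_trivIset (T : finType) (P : {set {set T}}) :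
    trivIset P -> set0 \notin P ->
  (#|P| <= #|T| ?= iff [forall A in P, #|A| == 1] && (cover P == setT))%N.
Proof.
move=> /eqP sum_cover P_neq0; rewrite -sum1_card -cardsT.
have card_ge1 A : A \in P -> (1 <= #|A| ?= iff (#|A| == 1))%N.
  move=> PA; rewrite eq_sym; apply: leqif_eq.
  by rewrite card_gt0; apply: contraNneq P_neq0 => <-.
apply: leqif_trans (leqif_sum card_ge1) _.
by rewrite sum_cover; apply: subset_leqif_cards; apply: subsetT.
Qed.

Section Supports.
Set Implicit Arguments.
Unset Strict Implicit.

Variables (V : finType) (r : nat).
Implicit Types (f g : {ffun V -> {mpoly int[r]}}) (s : seq {ffun V -> {mpoly int[r]}}).

Lemma supp_eq0 f : (supp f == set0) = (f == 0).
Proof.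
apply/eqP/eqP => [supp0 | ->]; last by apply/setP => p; rewrite !inE ffunE eqxx.
apply/ffunP => p; rewrite ffunE; apply/eqP.
by have := in_set0 p; rewrite -supp0 inE => /negbFE.
Qed.

Lemma fmul_eq0_disjoint f g : fmul f g = 0 -> [disjoint supp f & supp g].
Proof.
move=> /ffunP fg0; apply/pred0P => p /=; rewrite !inE -negb_or -mulf_eq0.
by have := fg0 p; rewrite !ffunE => ->; rewrite eqxx.
Qed.

Definition supports s : {set {set V}} := [set:: [seq supp f | f <- s]].

Lemma supports_card1P s :
  reflect (forall f, f \in s -> #|supp f| = 1%N)
          [forall A in supports s, #|A| == 1%N].
Proof.
apply: (iffP forall_inP) => [card1 f sf | card1 A].
  by apply/eqP/card1; rewrite inE map_f.
by rewrite inE => /mapP[f sf ->]; rewrite card1.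
Qed.

Lemma cover_supportsP s :
  reflect (forall p, exists2 f, f \in s & p \in supp f)
          (cover (supports s) == setT).
Proof.
rewrite eqEsubset subsetT /=; apply: (iffP subsetP) => [covered p | covered p _].
  have /bigcupP[A] := covered p (in_setT p).
  by rewrite inE => /mapP[f sf ->]; exists f.
have [f sf fp] := covered p.
by apply/bigcupP; exists (supp f); rewrite // inE map_f.
Qed.

Variable F : {ffun V -> {mpoly int[r]}} -> Prop.
Hypothesis F_neq0 : forall f, F f -> f != 0.
Hypothesis F_orthogonal : forall f g, F f -> F g -> f != g -> fmul f g = 0.

Lemma supp_family_inj f g : F f -> F g -> supp f = supp g -> f = g.
Proof.
move=> Ff Fg supp_fg; case: (eqVneq f g) => // /(F_orthogonal Ff Fg).
move/fmul_eq0_disjoint; rewrite -supp_fg -setI_eq0 setIid supp_eq0.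
by rewrite (negbTE (F_neq0 Ff)).
Qed.

Lemma leqif_size_family s : uniq s -> (forall f, f \in s -> F f) ->
  (size s <= #|V| ?= iff
     [forall A in supports s, #|A| == 1%N] && (cover (supports s) == setT))%N.
Proof.
move=> s_uniq sF.
have supp_uniq : uniq [seq supp f | f <- s].
  by rewrite map_inj_in_uniq // => f g sf sg; apply: supp_family_inj; apply: sF.
have <- : #|supports s| = size s by rewrite cardsE (card_uniqP supp_uniq) size_map.
apply: leqif_card_trivIset.
  apply/trivIsetP => A B; rewrite !inE => /mapP[f sf ->] /mapP[g sg ->] supp_fg.
  apply/fmul_eq0_disjoint/(F_orthogonal (sF _ sf) (sF _ sg)).
  by apply: contra_neq supp_fg => ->.
by rewrite inE; apply/mapP => -[f sf /esym/eqP]; rewrite supp_eq0; apply/negP/F_neq0/sF.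
Qed.

End Supports.

Theorem lemma3p2 (V E : finType) (n r : nat) (src tgt : E -> V) (rev : E -> E)
    (alpha : E -> {ffun 'I_r -> int})
    (F : {ffun V -> {mpoly int[r]}} -> Prop) :
  abstract_GKM n src tgt rev alpha ->
  (forall f, F f -> in_HT src tgt alpha f /\ f != 0) ->
  (forall f g, F f -> F g -> f != g -> fmul f g = 0) ->
  (* |F| <= |V|: every finite list of distinct elements of F has length <= |V| *)
  (forall s : seq {ffun V -> {mpoly int[r]}},
      uniq s -> (forall f, f \in s -> F f) -> (size s <= #|V|)%N) /\
  (* equality case: if s enumerates F (F is finite by the first part) *)
  (forall s : seq {ffun V -> {mpoly int[r]}},
      uniq s -> (forall f, f \in s <-> F f) ->
      (size s = #|V| <->
         ((forall f, F f -> #|supp f| = 1%N) /\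
          (forall p : V, exists2 f, F f & p \in supp f)))).
Proof.
move=> _ F_HT F_orthogonal.
have F_neq0 f : F f -> f != 0 by case/F_HT.
have size_family := leqif_size_family F_neq0 F_orthogonal.
split=> [s s_uniq sF | s s_uniq sF]; first exact: size_family.
have /eq_leqif size_eq := size_family s s_uniq (fun f => (sF f).1).
rewrite (rwP eqP) size_eq; split.
- case/andP=> /supports_card1P card1 /cover_supportsP covered; split.
    by move=> f /sF; apply: card1.
  by move=> p; have [f /sF] := covered p; exists f.
- case=> card1 covered; apply/andP; split.
    by apply/supports_card1P => f /sF; apply: card1.
  by apply/cover_supportsP => p; have [f /sF] := covered p; exists f.
Qed.
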